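(* For each $i=1,\dots,d$, every $\mathbf F_i$-supermartingale is also an $\mathbf F^i$-supermartingale.
   Context: $(\Omega,\mathcal F,\mathbb P)$ is complete and $\{\mathcal F(\tilde s)\}_{\tilde s\in\mathbb N_0^d}$ satisfies (F1) $\mathcal F(\tilde s)\subseteq\mathcal F(\tilde r)$ for $\tilde s\le\tilde r$ componentwise; (F2) $\mathcal F(\tilde 0)$ contains all null sets; (F4) for all $\tilde s,\tilde r$, $\mathcal F(\tilde s)$ and $\mathcal F(\tilde r)$ are conditionally independent given $\mathcal F(\tilde s\wedge\tilde r)$ ($\wedge$ componentwise minimum). With $\tilde e_i$ the $i$th unit vector: $\mathcal F_i(t):=\mathcal F(t\tilde e_i)$, $\mathbf F_i=\{\mathcal F_i(t)\}_{t\in\mathbb N_0}$; $\mathcal F^i(t):=\sigma\big(\bigcup_{\tilde r\in\mathbb N_0^d:\,r_i\le t}\mathcal F(\tilde r)\big)$, $\mathbf F^i=\{\mathcal F^i(t)\}_{t\in\mathbb N_0}$. *)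

From HB Require Import structures.
From mathcomp Require Import all_boot all_order all_algebra.
From mathcomp Require Import all_classical all_reals all_analysis.
Set Implicit Arguments. Unset Strict Implicit. Unset Printing Implicit Defensive.
Import Order.TTheory GRing.Theory Num.Theory.
Local Open Scope classical_set_scope.
Local Open Scope ring_scope.

Section defs.
Context (dsp : measure_display) (T : measurableType dsp) (R : realType).

Definition sub_sigma (G : set (set T)) :=
  sigma_algebra setT G /\ G `<=` measurable.

Definition measurable_wrt (G : set (set T)) (f : T -> R) :=
  forall B : set R, measurable B -> G (f @^-1` B).

Variable P : probability T R.

Definition is_cond_exp (G : set (set T)) (X Y : T -> R) :=
  [/\ measurable_wrt G Y, P.-integrable setT (EFin \o Y) &
      forall A, G A -> (\int[P]_(x in A) (Y x)%:E = \int[P]_(x in A) (X x)%:E)%E].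

Definition cond_indep (G1 G2 H : set (set T)) :=
  forall A B, G1 A -> G2 B ->
    exists YA YB : T -> R,
      [/\ is_cond_exp H (\1_A) YA, is_cond_exp H (\1_B) YB &
          is_cond_exp H (\1_(A `&` B)) (YA \* YB)].

Definition supermartingale (G : nat -> set (set T)) (X : nat -> T -> R) :=
  [/\ forall t, measurable_wrt (G t) (X t),
      forall t, P.-integrable setT (EFin \o X t) &
      forall s t, (s <= t)%N -> forall Y, is_cond_exp (G s) (X t) Y ->
        {ae P, forall x, Y x <= X s x}].
End defs.

Definition mleq (d : nat) (s r : 'I_d -> nat) := forall i, (s i <= r i)%N.
Definition mmin (d : nat) (s r : 'I_d -> nat) : 'I_d -> nat :=
  fun i => minn (s i) (r i).
Definition unitv (d : nat) (i : 'I_d) (t : nat) : 'I_d -> nat :=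
  fun j => if j == i then t else 0%N.

(* F_i(t) = F(t e_i) *)
Definition axisF (T : Type) (d : nat) (F : ('I_d -> nat) -> set (set T))
  (i : 'I_d) : nat -> set (set T) := fun t => F (unitv i t).
(* F^i(t) = sigma( U_{r : r_i <= t} F(r) ) *)
Definition slabF (T : Type) (d : nat) (F : ('I_d -> nat) -> set (set T))
  (i : 'I_d) : nat -> set (set T) :=
  fun t => smallest (sigma_algebra setT)
             (\bigcup_(r in [set r : 'I_d -> nat | (r i <= t)%N]) F r).

(* Fix s <= t and a version Z of E[X_t | F_i(s)], so that Z <= X_s a.s.; it
   suffices that Z is also a version of E[X_t | F^i(s)].  Since F^i(s) is
   generated by the intersection-stable family of the events A in some F(r)
   with r_i <= s, by Dynkin's lemma it is enough that E[Z 1_A] = E[X_t 1_A] for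
   those A.  By (F4), F(r) and F(t e_i) are conditionally independent given
   F(r_i e_i), so W = E[1_A | F(r_i e_i)] is also E[1_A | F(t e_i)]; as W is
   F(s e_i)-measurable, E[Z 1_A] = E[Z W] = E[X_t W] = E[X_t 1_A]. *)

From HB Require Import structures.
From mathcomp Require Import all_boot all_order all_algebra.
From mathcomp Require Import all_classical all_reals all_analysis.
From mathcomp Require Import measurable_realfun.
Import Order.TTheory GRing.Theory Num.Theory.
Set Implicit Arguments. Unset Strict Implicit. Unset Printing Implicit Defensive.
Local Open Scope classical_set_scope.
Local Open Scope ring_scope.

Section sub_sigma_algebra.
Context {d : measure_display} {T : measurableType d} (G : set (set T)).
Hypothesis sG : sub_sigma G.
Local Notation TG := (g_sigma_algebraType G).

Lemma sub_sigma_measurableP (A : set T) : measurable (A : set TG) <-> G A.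
Proof. by rewrite measurable_g_measurableTypeE //; case: sG. Qed.

Lemma sub_sigma_measurable A : G A -> measurable A.
Proof. exact: sG.2. Qed.

Lemma sub_sigma_setT : G setT.
Proof. by apply/sub_sigma_measurableP. Qed.

Lemma sub_sigma_setI A B : G A -> G B -> G (A `&` B).
Proof.
move=> /sub_sigma_measurableP GA /sub_sigma_measurableP GB.
by apply/sub_sigma_measurableP/measurableI.
Qed.

Lemma measurable_sub_sigma_id : measurable_fun [set: T] (id : T -> TG).
Proof.
move=> _ B /sub_sigma_measurableP GB; rewrite setTI preimage_id.
exact: sub_sigma_measurable.
Qed.

Lemma measurable_fun_sub_sigma {d'} {U : measurableType d'} (f : T -> U) :
  measurable_fun [set: TG] (f : TG -> U) -> measurable_fun [set: T] f.
Proof.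
move=> mf _ B mB; have := mf measurableT B mB; rewrite !setTI.
by move/sub_sigma_measurableP/sub_sigma_measurable.
Qed.

Context {R : realType}.

Lemma measurable_wrtP (f : T -> R) :
  measurable_wrt G f <-> measurable_fun [set: TG] (f : TG -> R).
Proof.
split => [mf _ B mB | mf B mB]; first by rewrite setTI; apply/sub_sigma_measurableP/mf.
by apply/sub_sigma_measurableP; rewrite -[X in measurable X]setTI; exact: mf.
Qed.

Lemma measurable_wrt_measurable (f : T -> R) :
  measurable_wrt G f -> measurable_fun [set: T] f.
Proof. by move/measurable_wrtP/measurable_fun_sub_sigma. Qed.

Lemma measurable_wrt_cst (c : R) : measurable_wrt G (cst c).
Proof. by apply/measurable_wrtP. Qed.

End sub_sigma_algebra.

Lemma measurable_wrtS {d} {T : measurableType d} {R : realType}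
    (G1 G2 : set (set T)) (f : T -> R) :
  G1 `<=` G2 -> measurable_wrt G1 f -> measurable_wrt G2 f.
Proof. by move=> G12 mf B mB; apply/G12/mf. Qed.

Section integrals_on_sub_sigma.
Context {d : measure_display} {T : measurableType d} {R : realType}.
Variable mu : {measure set T -> \bar R}.
Local Open Scope ereal_scope.

Definition integrals_agree (G : set (set T)) (f1 f2 : T -> R) :=
  forall C, G C -> \int[mu]_(x in C) (f1 x)%:E = \int[mu]_(x in C) (f2 x)%:E.

Lemma integral_setT_indic (B : set T) (f : T -> R) :
  \int[mu]_(x in B) (f x)%:E = \int[mu]_x (f x * \1_B x)%:E.
Proof.
by rewrite integral_mkcond; apply: eq_integral => x _; rewrite epatch_indic /= EFinM.
Qed.

Lemma integrable_mul_bounded (f g : T -> R) :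
  mu.-integrable setT (EFin \o f) -> measurable_fun setT g ->
  (forall x, `|g x| <= 1)%R -> mu.-integrable setT (EFin \o (f \* g)%R).
Proof.
move=> fi mg g1; have mf := measurable_int _ fi.
apply: le_integrable fi => //.
  by apply/measurable_EFinP/measurable_funM => //; exact/measurable_EFinP.
by move=> x _; rewrite /= lee_fin normrM ler_piMr.
Qed.

Lemma integrable_bounded_mul (f g : T -> R) :
  mu.-integrable setT (EFin \o f) -> measurable_fun setT g ->
  (forall x, `|g x| <= 1)%R -> mu.-integrable setT (EFin \o (g \* f)%R).
Proof.
move=> fi mg g1; rewrite (_ : (g \* f = f \* g)%R); first exact: integrable_mul_bounded.
by apply/funext => x; rewrite /= mulrC.
Qed.

Lemma integrals_le_ae_le (G : set (set T)) (f1 f2 : T -> R) : sub_sigma G ->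
  measurable_wrt G f1 -> measurable_wrt G f2 ->
  mu.-integrable setT (EFin \o f1) -> mu.-integrable setT (EFin \o f2) ->
  (forall C, G C -> \int[mu]_(x in C) (f1 x)%:E <= \int[mu]_(x in C) (f2 x)%:E) ->
  {ae mu, forall x, (f1 x <= f2 x)%R}.
Proof.
move=> sG m1 m2 i1 i2 le12; pose S := [set x | (f2 x < f1 x)%R].
have GS : G S.
  have := measurable_fun_ltr ((measurable_wrtP sG _).1 m2) ((measurable_wrtP sG _).1 m1).
  by move=> /(_ measurableT [set true] I); rewrite setTI => /(sub_sigma_measurableP sG).
have mS : measurable S := sub_sigma_measurable sG GS.
have mf1 := measurable_wrt_measurable sG m1.
have mf2 := measurable_wrt_measurable sG m2.
have mh : measurable_fun S (EFin \o (f1 \- f2)%R).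
  by apply/measurable_EFinP/measurable_funTS/measurable_funB.
have : \int[mu]_(x in S) `|(EFin \o (f1 \- f2)%R) x| = 0.
  apply/eqP; rewrite eq_le integral_ge0 ?andbT //.
  rewrite (eq_integral (fun x => (f1 x)%:E - (f2 x)%:E)); last first.
    by move=> x; rewrite inE /S /= => lt; rewrite ger0_norm ?subr_ge0 ?ltW // EFinB.
  by rewrite integralB_EFin ?sube_le0 ?le12 //; apply: integrableS (subsetT _) _.
move/(ae_eq_integral_abs _ mS mh); apply: filterS => x /= f0.
rewrite leNgt; apply/negP => lt; move/eqP: (f0 lt).
by rewrite eqe subr_eq0 => /eqP eq12; rewrite eq12 ltxx in lt.
Qed.

Lemma integrals_agree_g_sigma (U : set (set T)) (f1 f2 : T -> R) :
  setI_closed U -> U `<=` measurable ->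
  mu.-integrable setT (EFin \o f1) -> mu.-integrable setT (EFin \o f2) ->
  \int[mu]_x (f1 x)%:E = \int[mu]_x (f2 x)%:E ->
  integrals_agree U f1 f2 -> integrals_agree <<s U >> f1 f2.
Proof.
move=> UI Um i1 i2 eT eU.
have sUm : <<s U >> `<=` measurable.
  by apply: smallest_sub => //; exact: sigma_algebra_measurable.
apply: (@dynkin_induction _ (g_sigma_algebraType U)) => //.
- move=> S mS eS; have mS' := sUm _ mS.
  have integral_setC (f : T -> R) : mu.-integrable setT (EFin \o f) ->
      \int[mu]_(x in ~` S) (f x)%:E = \int[mu]_x (f x)%:E - \int[mu]_(x in S) (f x)%:E.
    move=> fi; have mf : measurable_fun setT (EFin \o f) := measurable_int _ fi.
    rewrite -(setUCr S) integral_setU //; last by rewrite disj_set2E setICr.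
    - rewrite [X in _ = X - _]addeC addeK //.
      by apply: integrable_fin_num => //; exact: integrableS fi.
    - exact: measurableC.
    - by rewrite setUCr.
  by rewrite !integral_setC // eT eS.
- move=> F mF tF eF.
  have mF' k : measurable (F k : set T) by exact: (sUm _ (mF k)).
  have mU : measurable (\bigcup_k F k : set T) by exact: bigcupT_measurable.
  rewrite !integral_bigcup //; try exact: (integrableS measurableT mU (subsetT _)).
  by congr (limn _); apply/funext => n; apply: eq_bigr => k _; exact: eF.
Qed.

End integrals_on_sub_sigma.

Section nonnegative_integrands.
Context {d : measure_display} {T : measurableType d} {R : realType}.
Variables (mu : {measure set T -> \bar R}) (G : set (set T)).
Hypothesis sG : sub_sigma G.
Local Notation TG := (g_sigma_algebraType G).
Local Open Scope ereal_scope.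
Import HBNNSimple.

Lemma integral_nnsfun_mul_ge0 (h : {nnsfun TG >-> R}) (D : T -> R) :
  (forall x, 0 <= D x)%R -> measurable_fun setT D ->
  \int[mu]_x ((h x)%:E * (D x)%:E) =
  \sum_(y \in range h) (y%:E * \int[mu]_(x in (h @^-1` [set y] : set T)) (D x)%:E).
Proof.
move=> D0 mD.
have mpre y : measurable (h @^-1` [set y] : set T).
  apply/(sub_sigma_measurable sG)/(sub_sigma_measurableP sG).
  by rewrite -[X in measurable X]setTI; exact: measurable_funP.
have t0 y x : (0 <= (y * \1_(h @^-1` [set y]) x)%:E).
  rewrite lee_fin indicE; case: (boolP (x \in _)) => [|_]; last by rewrite mulr0.
  by rewrite inE /= => <-; rewrite mulr1.
under eq_integral => x _ do rewrite fimfunE -fsumEFin // ge0_mule_fsuml //.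
rewrite ge0_integral_fsum //; last 2 first.
- move=> y; apply: emeasurable_funM; last exact/measurable_EFinP.
  by apply/measurable_EFinP/measurable_funM => //; exact: measurable_indic.
- by move=> y x _; rewrite mule_ge0 // lee_fin.
apply: eq_fsbigr => y; rewrite inE => -[x0 _ hx0].
have y0 : (0 <= y)%R by rewrite -hx0; exact: fun_ge0.
under eq_integral do rewrite EFinM -muleA.
rewrite ge0_integralZl ?lee_fin //.
- congr (_ * _); rewrite [RHS]integral_mkcond; apply: eq_integral => x _.
  by rewrite epatch_indic /= muleC.
- apply: emeasurable_funM; last exact/measurable_EFinP.
  by apply/measurable_EFinP; exact: measurable_indic.
- by move=> x _; rewrite mule_ge0 // lee_fin.
Qed.

(* Approximate [g] from below by [G]-simple functions, on whose level sets
   [D1] and [D2] have the same integrals. *)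
Lemma ge0_integrals_agree_mul (D1 D2 : T -> R) (g : T -> \bar R) :
  (forall x, 0 <= D1 x)%R -> (forall x, 0 <= D2 x)%R ->
  measurable_fun setT D1 -> measurable_fun setT D2 ->
  integrals_agree mu G D1 D2 ->
  measurable_fun [set: TG] (g : TG -> \bar R) -> (forall x, 0 <= g x) ->
  \int[mu]_x (g x * (D1 x)%:E) = \int[mu]_x (g x * (D2 x)%:E).
Proof.
move=> D10 D20 mD1 mD2 D12 mg g0.
pose h := nnsfun_approx (@measurableT _ TG) mg.
have approx (D : T -> R) : (forall x, 0 <= D x)%R -> measurable_fun setT D ->
    \int[mu]_x (g x * (D x)%:E) = limn (fun n => \int[mu]_x ((h n x)%:E * (D x)%:E)).
  move=> D0 mD; rewrite -monotone_convergence //.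
  - apply: eq_integral => x _; apply/esym/cvg_lim => //; apply: cvgeZr => //.
    exact: cvg_nnsfun_approx.
  - move=> n; apply: emeasurable_funM; last exact/measurable_EFinP.
    by apply/measurable_EFinP/(measurable_fun_sub_sigma sG); exact: measurable_funP.
  - by move=> n x _; rewrite mule_ge0 // lee_fin.
  - move=> x _ a b ab; rewrite lee_wpmul2r ?lee_fin //.
    by move: x; apply/lefP; exact: (nd_nnsfun_approx measurableT mg ab).
rewrite !approx //; congr (limn _); apply/funext => n.
rewrite !integral_nnsfun_mul_ge0 //; apply: eq_fsbigr => y _; congr (_ * _).
apply/D12/(sub_sigma_measurableP sG).
by rewrite -[X in measurable X]setTI; exact: measurable_funP.
Qed.

End nonnegative_integrands.

Section signed_integrands.
Context {d : measure_display} {T : measurableType d} {R : realType}.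
Variables (mu : {measure set T -> \bar R}) (G : set (set T)).
Hypothesis sG : sub_sigma G.

Lemma ge0_integral_mul_eq0 (V h : T -> R) :
  mu.-integrable setT (EFin \o V) ->
  (forall C, G C -> \int[mu]_(x in C) (V x)%:E = 0)%E ->
  measurable_wrt G h -> (forall x, 0 <= h x) ->
  mu.-integrable setT (EFin \o (h \* V)) -> (\int[mu]_x (h x * V x)%:E = 0)%E.
Proof.
move=> iV V0 mh h0 ihV.
have mV : measurable_fun setT V by apply/measurable_EFinP; exact: measurable_int iV.
have VE x : V^\+ x - V^\- x = V x := congr1 (fun f => f x) (funrposBneg V).
have Vpm : integrals_agree mu G V^\+ V^\-.
  move=> C GC; have mC := sub_sigma_measurable sG GC.
  have iVC : mu.-integrable C (EFin \o V) by apply: integrableS iV.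
  have iVp : mu.-integrable C (EFin \o V^\+) := integrable_funrpos mC iVC.
  have iVn : mu.-integrable C (EFin \o V^\-) := integrable_funrneg mC iVC.
  have := V0 C GC; under eq_integral do rewrite -VE EFinB.
  rewrite integralB_EFin // => /eqP.
  by rewrite sube_eq ?add0e ?fin_num_adde_defl ?integrable_fin_num // => /eqP.
have hVpos : h \* V^\+ = (h \* V)^\+.
  by apply/funext => x; rewrite /= /funrpos maxr_pMr // mulr0.
have hVneg : h \* V^\- = (h \* V)^\-.
  by apply/funext => x; rewrite /= /funrneg maxr_pMr // mulr0 mulrN.
have ihVpos : mu.-integrable setT (EFin \o (h \* V^\+)).
  by rewrite hVpos; exact: integrable_funrpos.
have ihVneg : mu.-integrable setT (EFin \o (h \* V^\-)).
  by rewrite hVneg; exact: integrable_funrneg.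
have mhE : measurable_fun [set: g_sigma_algebraType G] (EFin \o h).
  by apply/measurable_EFinP/(measurable_wrtP sG).
have := ge0_integrals_agree_mul sG (@funrpos_ge0 _ _ V) (@funrneg_ge0 _ _ V)
  (measurable_funrpos mV) (measurable_funrneg mV) Vpm mhE h0.
under eq_integral do rewrite -EFinM.
under [in X in _ = X -> _]eq_integral do rewrite -EFinM.
under [X in _ -> X = _]eq_integral do rewrite -VE mulrBr EFinB.
rewrite integralB_EFin // => ->; rewrite subee //.
exact: integrable_fin_num.
Qed.

Lemma integral_mul_eq0 (V g : T -> R) :
  mu.-integrable setT (EFin \o V) ->
  (forall C, G C -> \int[mu]_(x in C) (V x)%:E = 0)%E ->
  measurable_wrt G g ->
  mu.-integrable setT (EFin \o (g \* V)) -> (\int[mu]_x (g x * V x)%:E = 0)%E.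
Proof.
move=> iV V0 mg igV.
have mV : measurable_fun setT V by apply/measurable_EFinP; exact: measurable_int iV.
have mgT : measurable_fun [set: g_sigma_algebraType G] g by exact/(measurable_wrtP sG).
have mg' := measurable_wrt_measurable sG mg.
have gE x : g x = g^\+ x - g^\- x := esym (congr1 (fun f => f x) (funrposBneg g)).
have le_normM (k : T -> R) : (forall x, `|k x| <= `|g x|) ->
    measurable_fun setT k -> mu.-integrable setT (EFin \o (k \* V)).
  move=> kg mk; apply: le_integrable igV => //.
    by apply/measurable_EFinP; exact: measurable_funM.
  by move=> x _; rewrite /= lee_fin !normrM ler_wpM2r.
have le_pos x : `|g^\+ x| <= `|g x|.
  by rewrite ger0_norm // -[leRHS]/((Num.norm \o g) x) -funrposDneg lerDl.
have le_neg x : `|g^\- x| <= `|g x|.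
  by rewrite ger0_norm // -[leRHS]/((Num.norm \o g) x) -funrposDneg lerDr.
have igpV := le_normM _ le_pos (measurable_funrpos mg').
have ignV := le_normM _ le_neg (measurable_funrneg mg').
under eq_integral do rewrite gE mulrBl EFinB.
rewrite integralB_EFin //.
rewrite !ge0_integral_mul_eq0 ?sube0 //.
- by apply/(measurable_wrtP sG); exact: measurable_funrneg.
- by apply/(measurable_wrtP sG); exact: measurable_funrpos.
Qed.

Lemma integrals_agree_mul (W1 W2 g : T -> R) :
  mu.-integrable setT (EFin \o W1) -> mu.-integrable setT (EFin \o W2) ->
  integrals_agree mu G W1 W2 -> measurable_wrt G g ->
  mu.-integrable setT (EFin \o (g \* W1)) -> mu.-integrable setT (EFin \o (g \* W2)) ->
  (\int[mu]_x (g x * W1 x)%:E = \int[mu]_x (g x * W2 x)%:E)%E.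
Proof.
move=> i1 i2 W12 mg ig1 ig2.
have iB (f1 f2 : T -> R) : mu.-integrable setT (EFin \o f1) ->
    mu.-integrable setT (EFin \o f2) -> mu.-integrable setT (EFin \o (f1 \- f2)).
  exact: integrableB.
have fin (f : T -> R) C : measurable C -> mu.-integrable setT (EFin \o f) ->
    (\int[mu]_(x in C) (f x)%:E \is a fin_num)%E.
  by move=> mC fi; apply: integrable_fin_num => //; exact: integrableS fi.
have gWE : g \* (W1 \- W2) = g \* W1 \- g \* W2.
  by apply/funext => x; rewrite /= mulrBr.
have V0 C : G C -> (\int[mu]_(x in C) ((W1 \- W2) x)%:E = 0)%E.
  move=> GC; have mC := sub_sigma_measurable sG GC.
  under eq_integral do rewrite EFinB.
  by rewrite integralB_EFin ?W12 ?subee ?fin //; apply: integrableS (subsetT _) _.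
have := integral_mul_eq0 (iB _ _ i1 i2) V0 mg.
rewrite gWE => /(_ (iB _ _ ig1 ig2)).
under eq_integral do rewrite mulrBr EFinB.
rewrite integralB_EFin // => /eqP.
by rewrite sube_eq ?add0e ?fin_num_adde_defl ?fin // => /eqP.
Qed.

End signed_integrands.

Section conditional_expectation.
Context {d : measure_display} {T : measurableType d} {R : realType}.
Variable P : probability T R.
Local Open Scope ereal_scope.

Lemma is_cond_exp_ae_eq (G : set (set T)) (X Y1 Y2 : T -> R) : sub_sigma G ->
  is_cond_exp P G X Y1 -> is_cond_exp P G X Y2 -> {ae P, forall x, Y1 x = Y2 x}.
Proof.
move=> sG [m1 i1 e1] [m2 i2 e2].
have le12 : {ae P, forall x, (Y1 x <= Y2 x)%R}.
  by apply: integrals_le_ae_le sG _ _ _ _ _ => // C GC; rewrite e1 // e2.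
have le21 : {ae P, forall x, (Y2 x <= Y1 x)%R}.
  by apply: integrals_le_ae_le sG _ _ _ _ _ => // C GC; rewrite e1 // e2.
by apply: filterS2 le12 le21 => x a b; apply/eqP; rewrite eq_le a b.
Qed.

(* Radon-Nikodym derivative, on the sub-sigma-algebra, of the charge induced
   by [X] with respect to the trace of [P]. *)
Lemma cond_exp_exists (G : set (set T)) (X : T -> R) : sub_sigma G ->
  P.-integrable setT (EFin \o X) -> exists Y, is_cond_exp P G X Y.
Proof.
move=> sG iX; have mid := measurable_sub_sigma_id sG.
pose mu := distribution P (mfun_Sub (mem_set mid)).
have [nu nuE] : exists nu : {charge set g_sigma_algebraType G -> \bar R},
    forall A, nu A = \int[P]_(x in A) (X x)%:E.
  (* the charge instance of [pushforward] needs the measurability of [id] *)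
  unshelve eexists (pushforward (induced_charge iX) (id : T -> g_sigma_algebraType G)
    : {charge set _ -> \bar R}) => //.
have numu : nu `<< mu.
  apply/null_content_dominatesP => A mA muA0; rewrite nuE.
  apply: null_set_integral => //.
  - exact/(sub_sigma_measurable sG)/(sub_sigma_measurableP sG).
  - exact/measurable_funTS/(measurable_int _ iX).
pose f := Radon_Nikodym nu mu.
have ffin x : f x \is a fin_num by exact: Radon_Nikodym_fin_num.
have fint : mu.-integrable setT f by exact: Radon_Nikodym_integrable.
have mf : measurable_fun setT f by exact: measurable_int fint.
have fE : EFin \o (fine \o f) = f by apply/funext => x /=; rewrite fineK.
have mfT : measurable_fun [set: T] f := measurable_fun_sub_sigma sG mf.
have fintT : P.-integrable setT f.
  apply/integrableP; split => //; case/integrableP: fint => _.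
  rewrite ge0_integral_pushforward ?preimage_id //; exact: measurableT_comp.
exists (fine \o f); split.
- by apply/(measurable_wrtP sG); apply/measurable_EFinP; rewrite fE.
- by rewrite fE.
- move=> A GA; have mA := sub_sigma_measurable sG GA.
  rewrite -nuE (Radon_Nikodym_integral numu); last exact/(sub_sigma_measurableP sG).
  rewrite integral_pushforward ?preimage_id //; last exact/(sub_sigma_measurableP sG).
  + by apply: eq_integral => x _; rewrite /= fineK.
  + exact: integrableS measurableT mA (subsetT _) fintT.
Qed.

(* Clamping a version of E[1_A | G] to [0, 1] changes it only on a null set. *)
Lemma cond_exp_indic_bounded (G : set (set T)) (A : set T) : sub_sigma G ->
  measurable A -> exists W, is_cond_exp P G \1_A W /\ forall x, (0 <= W x <= 1)%R.
Proof.
move=> sG mA; have iA := integrable_indic P mA.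
have [Y [mY iY eY]] := cond_exp_exists sG iA.
have icst (c : R) : P.-integrable setT (EFin \o cst c).
  exact: finite_measure_integrable_cst.
have Y_ge0 : {ae P, forall x, (0 <= Y x)%R}.
  apply: (integrals_le_ae_le sG (measurable_wrt_cst sG 0%R) mY (icst 0%R) iY) => C GC.
  have mC := sub_sigma_measurable sG GC.
  by rewrite eY // integral_indic // integral0_eq //; exact: measure_ge0.
have Y_le1 : {ae P, forall x, (Y x <= 1)%R}.
  apply: (integrals_le_ae_le sG mY (measurable_wrt_cst sG 1%R) iY (icst 1%R)) => C GC.
  have mC := sub_sigma_measurable sG GC.
  rewrite eY // integral_indic // (eq_integral (cst 1)) // integral_cst // mul1e.
  by apply: le_measure; rewrite ?inE //; exact: measurableI.
pose W x := Num.min (Num.max (Y x) 0%R) 1%R.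
have W01 x : (0 <= W x <= 1)%R.
  by rewrite /W le_min ge_min le_max !lexx !orbT ler01.
have mW : measurable_wrt G W.
  apply/(measurable_wrtP sG); apply: measurable_minr => //.
  by apply: measurable_maxr => //; exact/(measurable_wrtP sG).
have WY : {ae P, forall x, W x = Y x}.
  by apply: filterS2 Y_ge0 Y_le1 => x Y0 Y1; rewrite /W max_l // min_l.
have mWT := measurable_wrt_measurable sG mW.
have mYT := measurable_wrt_measurable sG mY.
exists W; split => //; split => // [|C GC].
  rewrite (_ : W = cst 1 \* W)%R; last by apply/funext => x; rewrite /= mul1r.
  apply: integrable_mul_bounded => // x.
  by rewrite ger0_norm; have /andP[] := W01 x.
have mC := sub_sigma_measurable sG GC.
rewrite -eY //; apply: ae_eq_integral => //.
- by apply/measurable_EFinP; exact: measurable_funTS.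
- by apply/measurable_EFinP; exact: measurable_funTS.
- by apply: filterS WY => x /= ->.
Qed.

Lemma normr_indic_le1 (A : set T) x : (`|\1_A x| <= 1 :> R)%R.
Proof. by rewrite indicE; case: (_ \in _); rewrite ?normr1 ?normr0. Qed.

Lemma cond_indep_cond_exp_indic (G1 G2 H : set (set T)) (A : set T) (W : T -> R) :
  sub_sigma G1 -> sub_sigma G2 -> sub_sigma H -> H `<=` G2 ->
  cond_indep P G1 G2 H -> G1 A ->
  is_cond_exp P H \1_A W -> is_cond_exp P G2 \1_A W.
Proof.
move=> sG1 sG2 sH HG2 indep GA cW; have [mW iW _] := cW.
split => //; first exact: measurable_wrtS mW.
move=> B GB; have mA := sub_sigma_measurable sG1 GA.
have mB := sub_sigma_measurable sG2 GB.
have [YA [YB [cA [_ iYB eYB] [_ iAB eAB]]]] := indep A B GA GB.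
have [mYA iYA _] := cA.
have mYAT := measurable_wrt_measurable sH mYA.
have mWT := measurable_wrt_measurable sH mW.
have mIB : measurable_fun setT (\1_B : T -> R) by exact: measurable_indic.
transitivity (\int[P]_(x in B) (YA x)%:E).
  apply: ae_eq_integral => //.
  - by apply/measurable_EFinP; exact: measurable_funTS.
  - by apply/measurable_EFinP; exact: measurable_funTS.
  - by apply: filterS (is_cond_exp_ae_eq sH cW cA) => x /= ->.
have iIB := integrable_indic P mB.
rewrite integral_setT_indic (integrals_agree_mul sH iIB iYB _ mYA) //.
- rewrite eAB; last exact: sub_sigma_setT sH.
  rewrite [RHS]integral_indic // [LHS]integral_indic ?setIT //; exact: measurableI.
- by move=> C HC; rewrite eYB.
- exact: integrable_mul_bounded (normr_indic_le1 B).
Qed.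

(* The tower property in the form E[Z 1_A] = E[Z W] = E[X W] = E[X 1_A],
   where W = E[1_A | G] happens to be H-measurable. *)
Lemma cond_exp_integral_indic (H G : set (set T)) (X Z W : T -> R) (A : set T) :
  sub_sigma H -> sub_sigma G -> H `<=` G -> measurable A ->
  measurable_wrt G X -> P.-integrable setT (EFin \o X) ->
  is_cond_exp P H X Z -> is_cond_exp P G \1_A W ->
  measurable_wrt H W -> (forall x, `|W x| <= 1)%R ->
  \int[P]_(x in A) (Z x)%:E = \int[P]_(x in A) (X x)%:E.
Proof.
move=> sH sG HG mA mX iX [mZ iZ eZ] [_ iW eW] mWH W1.
have mIA : measurable_fun setT (\1_A : T -> R) by exact: measurable_indic.
have iIA := integrable_indic P mA.
have mWT := measurable_wrt_measurable sH mWH.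
rewrite [LHS]integral_setT_indic [RHS]integral_setT_indic.
transitivity (\int[P]_x (Z x * W x)%:E).
  apply/esym/(integrals_agree_mul sH iW iIA _ mZ).
  - by move=> C HC; rewrite eW //; exact: HG.
  - exact: integrable_mul_bounded.
  - exact: integrable_mul_bounded (normr_indic_le1 A).
transitivity (\int[P]_x (X x * W x)%:E).
  under eq_integral do rewrite mulrC. under [RHS]eq_integral do rewrite mulrC.
  apply: (integrals_agree_mul sH iZ iX eZ mWH).
  - exact: integrable_bounded_mul.
  - exact: integrable_bounded_mul.
apply: (integrals_agree_mul sG iW iIA eW mX).
- exact: integrable_mul_bounded.
- exact: integrable_mul_bounded (normr_indic_le1 A).
Qed.

End conditional_expectation.

Lemma mleq_unitv (d : nat) (i : 'I_d) (a b : nat) :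
  (a <= b)%N -> mleq (unitv i a) (unitv i b).
Proof. by move=> ab j; rewrite /unitv; case: (j == i). Qed.

Lemma mmin_unitv (d : nat) (i : 'I_d) (r : 'I_d -> nat) (t : nat) :
  (r i <= t)%N -> mmin r (unitv i t) = unitv i (r i).
Proof.
move=> rt; apply/funext => j; rewrite /mmin /unitv.
by case: eqP => [->|_]; [exact/minn_idPl|exact: minn0].
Qed.

Lemma axisF_sub_slabF (T : Type) (d : nat) (F : ('I_d -> nat) -> set (set T))
    (i : 'I_d) (s : nat) :
  axisF F i s `<=` slabF F i s.
Proof.
move=> A FA; apply: sub_gen_smallest; exists (unitv i s) => //.
by rewrite /= /unitv eqxx.
Qed.

Section slab_filtration.
Context {dsp : measure_display} {T : measurableType dsp} {R : realType}.
Variables (P : probability T R) (d : nat) (F : ('I_d -> nat) -> set (set T)).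
Hypothesis Fsub : forall s, sub_sigma (F s).
Hypothesis F1 : forall s r, mleq s r -> F s `<=` F r.
Hypothesis F4 : forall s r, cond_indep P (F s) (F r) (F (mmin s r)).
Variable i : 'I_d.

Lemma sub_sigma_slabF (s : nat) : sub_sigma (slabF F i s).
Proof.
split; first exact: smallest_sigma_algebra.
apply: smallest_sub; first exact: sigma_algebra_measurable.
by move=> B [r _ FB]; exact: (sub_sigma_measurable (Fsub r) FB).
Qed.

Lemma slab_generators_setI_closed (s : nat) :
  setI_closed (\bigcup_(r in [set r : 'I_d -> nat | (r i <= s)%N]) F r).
Proof.
move=> A B [r ri FA] [r' ri' FB].
exists (fun j => maxn (r j) (r' j)); first by rewrite /= geq_max ri ri'.
apply: (sub_sigma_setI (Fsub _)).
- by apply: F1 FA => j; exact: leq_maxl.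
- by apply: F1 FB => j; exact: leq_maxr.
Qed.

Lemma integral_axis_cond_exp (s t : nat) (X Z : T -> R) (r : 'I_d -> nat) (A : set T) :
  (s <= t)%N -> measurable_wrt (axisF F i t) X -> P.-integrable setT (EFin \o X) ->
  is_cond_exp P (axisF F i s) X Z -> (r i <= s)%N -> F r A ->
  (\int[P]_(x in A) (Z x)%:E = \int[P]_(x in A) (X x)%:E)%E.
Proof.
move=> st mX iX cZ ri FA; have rt := leq_trans ri st.
have mA := sub_sigma_measurable (Fsub r) FA.
have [W [cW W01]] := cond_exp_indic_bounded P (Fsub (unitv i (r i))) mA.
have cWt : is_cond_exp P (axisF F i t) \1_A W.
  apply: cond_indep_cond_exp_indic (Fsub r) (Fsub _) (Fsub _) _ _ FA cW.
  - exact/F1/mleq_unitv.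
  - by rewrite -(mmin_unitv rt); exact: F4.
apply: cond_exp_integral_indic (Fsub _) (Fsub _) _ mA mX iX cZ cWt _ _.
- exact/F1/mleq_unitv.
- by case: cW => mW _ _; apply: measurable_wrtS mW; exact/F1/mleq_unitv.
- by move=> x; have /andP[W0 W1] := W01 x; rewrite ger0_norm.
Qed.

Lemma cond_exp_slabF (s t : nat) (X Z : T -> R) :
  (s <= t)%N -> measurable_wrt (axisF F i t) X -> P.-integrable setT (EFin \o X) ->
  is_cond_exp P (axisF F i s) X Z -> is_cond_exp P (slabF F i s) X Z.
Proof.
move=> st mX iX cZ; have [mZ iZ eZ] := cZ.
split => //; first exact: measurable_wrtS (@axisF_sub_slabF _ _ F i s) mZ.
apply: (integrals_agree_g_sigma _ _ iZ iX).
- exact: slab_generators_setI_closed.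
- by move=> B [r _ FB]; exact: (sub_sigma_measurable (Fsub r) FB).
- by apply: eZ; exact: (sub_sigma_setT (Fsub _)).
- by move=> A [r ri FA]; exact: (integral_axis_cond_exp st mX iX cZ ri FA).
Qed.

End slab_filtration.

Theorem proposition6p4 (dsp : measure_display) (T : measurableType dsp)
  (R : realType) (P : probability T R) (d : nat)
  (F : ('I_d -> nat) -> set (set T))
  (Pcomplete : measure_is_complete P)
  (Fsub : forall s, sub_sigma (F s))
  (F1 : forall s r, mleq s r -> F s `<=` F r)
  (F2 : forall N, P.-negligible N -> F (fun _ => 0%N) N)
  (F4 : forall s r, cond_indep P (F s) (F r) (F (mmin s r))) :
  forall (i : 'I_d) (X : nat -> T -> R),
    supermartingale P (axisF F i) X -> supermartingale P (slabF F i) X.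
Proof.
move=> i X [mX iX superX]; split => // [t|s t st Y cY].
  exact: measurable_wrtS (@axisF_sub_slabF _ _ F i t) (mX t).
have [Z cZ] := cond_exp_exists (Fsub (unitv i s)) (iX t).
have cZslab := cond_exp_slabF Fsub F1 F4 st (mX t) (iX t) cZ.
have YZ := is_cond_exp_ae_eq (sub_sigma_slabF Fsub i s) cY cZslab.
by apply: filterS2 YZ (superX s t st Z cZ) => x ->.
Qed.
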